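(* Let $k \ge 1$ and $x \in \{2,3,4,5\}$ be integers, $m = 4k+x$, $\theta = 2\pi/m$. Let $u, v, w$ be points in general position with $w \in C_0^u$ and $v \in T_{uw}$, with $v$ to the left of $w$. Let $a$ be the intersection point of the side of $T_{uw}$ opposite $u$ with the left boundary ray of $C_0^v$. Let $C_i^v$ be the cone of $v$ containing $w$, and let $c$ and $d$ be the upper and lower corners of $T_{vw}$ (the two corners other than $v$). If $1 \le i \le k-1$, or if $i = k$ and $|cw| \le |dw|$, then $$\max\{|vc| + |cw|,\ |vd| + |dw|\} \le |va| + |aw| \quad\text{and}\quad \max\{|cw|, |dw|\} \le |aw|.$$
   Context: Cones: for $m \ge 2$, $\theta = 2\pi/m$; around each point $u$ draw $m$ rays with consecutive angular separation $\theta$, oriented so the vertical upward ray from $u$ bisects a cone, called $C_0^u$; cones are numbered $C_0^u,\dots,C_{m-1}^u$ clockwise, with the same orientation at every point. General position: no two points on a line parallel to a cone boundary ray, no two points on a line perpendicular to a cone bisector, no three points collinear. Canonical triangle: if $w$ lies in cone $C$ of $u$, $T_{uw}$ is the triangle bounded by the two boundary rays of $C$ and the line through $w$ perpendicular to the bisector of $C$. *)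

From Stdlib Require Import Reals List.
Open Scope R_scope.

Definition point := (R * R)%type.

Definition padd (p q : point) : point := (fst p + fst q, snd p + snd q).
Definition psub (p q : point) : point := (fst p - fst q, snd p - snd q).
Definition pscale (t : R) (p : point) : point := (t * fst p, t * snd p).
Definition dot (p q : point) : R := fst p * fst q + snd p * snd q.
Definition cross (p q : point) : R := fst p * snd q - snd p * fst q.
Definition pdist (p q : point) : R :=
  sqrt ((fst p - fst q) ^ 2 + (snd p - snd q) ^ 2).

Definition dir (al : R) : point := (cos al, sin al).

Definition theta (m : nat) : R := 2 * PI / INR m.

(* Angle of the bisector of cone C_j: C_0 is bisected by the upward vertical
   ray (angle pi/2) and cones are numbered clockwise. *)
Definition bis (m j : nat) : R := PI / 2 - INR j * theta m.

(* p lies in cone C_j^u: p <> u and the direction of p - u makes an angle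
   of at most theta/2 with the bisector of C_j (closed cone; boundary
   issues are excluded by general position). *)
Definition in_cone (m j : nat) (u p : point) : Prop :=
  exists (r al : R), 0 < r /\
    bis m j - theta m / 2 <= al <= bis m j + theta m / 2 /\
    p = padd u (pscale r (dir al)).

(* p lies in the canonical triangle T_{uw}, where w lies in cone C_j^u:
   the triangle bounded by the two boundary rays of C_j^u and the line
   through w perpendicular to the bisector of C_j^u. *)
Definition in_canon_tri (m j : nat) (u w p : point) : Prop :=
  (p = u \/ in_cone m j u p) /\
  dot (psub p u) (dir (bis m j)) <= dot (psub w u) (dir (bis m j)).

(* p is the corner of T_{vw} (w in cone C_j^v) lying on the boundary ray of
   C_j^v of angle  bis j + s * theta/2  (s = 1 or s = -1): the intersection of
   that ray with the line through w perpendicular to the bisector. *)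
Definition is_corner (m j : nat) (v w : point) (s : R) (p : point) : Prop :=
  exists t : R, 0 <= t /\
    p = padd v (pscale t (dir (bis m j + s * (theta m / 2)))) /\
    dot (psub p v) (dir (bis m j)) = dot (psub w v) (dir (bis m j)).

Definition gen_pos (m : nat) (P : list point) : Prop :=
  (forall p q, In p P -> In q P -> p <> q ->
     forall j : nat, (j < m)%nat ->
       cross (psub q p) (dir (bis m j + theta m / 2)) <> 0 /\
       cross (psub q p) (dir (bis m j - theta m / 2)) <> 0 /\
       dot (psub q p) (dir (bis m j)) <> 0) /\
  (forall p q r, In p P -> In q P -> In r P -> p <> q -> p <> r -> q <> r ->
     cross (psub q p) (psub r p) <> 0).

From Stdlib Require Import Reals List Lra Lia.
Open Scope R_scope.

(* In the frame of the cone C_i^v write w - v = D e + P n, with e the unit bisector and n its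
   left normal. Both corners of T_vw lie at distance t = D / cos(θ/2) from v, with
   |cw| = t sin(θ/2) - P and |dw| = t sin(θ/2) + P; and since a lies on the horizontal line
   through w, cos(θ/2) |va| and cos(θ/2) |aw| are affine in P as well. Every claimed
   inequality is therefore affine in P, so it suffices to check it at the ends of the range
   |P| <= t sin(θ/2), or of [0, t sin(θ/2)] when i = k and |cw| <= |dw|. There it reduces to an
   elementary inequality between sines and cosines of γ = θ/2 and φ = iθ, valid because
   (4i + 2) γ <= π, and (4i + 6) γ <= π when i < k. *)

Lemma psub_padd (v x : point) : psub (padd v x) v = x.
Proof. destruct v, x. unfold psub, padd. cbn [fst snd]. f_equal; ring. Qed.

Lemma dot_pscale (r : R) (x y : point) : dot (pscale r x) y = r * dot x y.
Proof. unfold dot, pscale. cbn [fst snd]. ring. Qed.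

Lemma cross_pscale (r : R) (x y : point) : cross x (pscale r y) = r * cross x y.
Proof. unfold cross, pscale. cbn [fst snd]. ring. Qed.

Lemma dot_dir (a b : R) : dot (dir a) (dir b) = cos (a - b).
Proof. unfold dot, dir. cbn [fst snd]. rewrite cos_minus. ring. Qed.

Lemma cross_dir (a b : R) : cross (dir a) (dir b) = sin (b - a).
Proof. unfold cross, dir. cbn [fst snd]. rewrite sin_minus. ring. Qed.

Lemma dot_psub_shift (p q v e : point) : dot (psub p q) e = dot (psub p v) e - dot (psub q v) e.
Proof. unfold dot, psub. cbn [fst snd]. ring. Qed.

Lemma cross_psub_shift (p q v e : point) :
  cross e (psub p q) = cross e (psub p v) - cross e (psub q v).
Proof. unfold cross, psub. cbn [fst snd]. ring. Qed.

Lemma frame_coords (p q : point) (b : R) :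
  fst p - fst q = dot (psub p q) (dir b) * cos b - cross (dir b) (psub p q) * sin b /\
  snd p - snd q = dot (psub p q) (dir b) * sin b + cross (dir b) (psub p q) * cos b.
Proof.
  pose proof (sin2_cos2 b) as Hb. unfold Rsqr in Hb.
  unfold dot, cross, psub, dir. cbn [fst snd]. split.
  - transitivity ((fst p - fst q) * (sin b * sin b + cos b * cos b)); [rewrite Hb |]; ring.
  - transitivity ((snd p - snd q) * (sin b * sin b + cos b * cos b)); [rewrite Hb |]; ring.
Qed.

Lemma pdist_padd_dir (p : point) (r al : R) : 0 <= r -> pdist p (padd p (pscale r (dir al))) = r.
Proof.
  intros Hr. pose proof (sin2_cos2 al) as Hal. unfold Rsqr in Hal.
  unfold pdist, padd, pscale, dir. cbn [fst snd].
  replace ((fst p - (fst p + r * cos al)) ^ 2 + (snd p - (snd p + r * sin al)) ^ 2) with (r ^ 2)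
    by nra.
  apply sqrt_pow2; exact Hr.
Qed.

Lemma pdist_same_snd (p q : point) : snd p = snd q -> fst p <= fst q -> pdist p q = fst q - fst p.
Proof.
  intros Hs Hf. unfold pdist. rewrite Hs.
  replace ((fst p - fst q) ^ 2 + (snd q - snd q) ^ 2) with ((fst q - fst p) ^ 2) by ring.
  apply sqrt_pow2; lra.
Qed.

Lemma pdist_perp (p q : point) (b : R) :
  dot (psub p q) (dir b) = 0 -> pdist p q = Rabs (cross (dir b) (psub p q)).
Proof.
  intros H0. destruct (frame_coords p q b) as [Hx Hy].
  rewrite H0 in Hx, Hy. unfold pdist. rewrite Hx, Hy, <- sqrt_Rsqr_abs.
  f_equal. pose proof (sin2_cos2 b). unfold Rsqr in *. nra.
Qed.

Lemma abs_sin_le_cos (d g : R) :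
  Rabs d <= g -> g < PI / 2 -> 0 < cos d /\ Rabs (sin d) * cos g <= cos d * sin g.
Proof.
  intros Hd Hg. pose proof PI_RGT_0.
  pose proof (Rle_abs d). pose proof (Rle_abs (- d)). rewrite Rabs_Ropp in *.
  split; [apply cos_gt_0; lra |].
  assert (Hm : 0 <= sin (g - d)) by (apply sin_ge_0; lra).
  assert (Hp : 0 <= sin (g + d)) by (apply sin_ge_0; lra).
  rewrite sin_minus in Hm. rewrite sin_plus in Hp.
  unfold Rabs. destruct (Rcase_abs (sin d)); lra.
Qed.

Lemma in_cone_coords (m j : nat) (v w : point) :
  theta m < PI -> in_cone m j v w ->
  0 < dot (psub w v) (dir (bis m j)) /\
  Rabs (cross (dir (bis m j)) (psub w v)) * cos (theta m / 2)
    <= dot (psub w v) (dir (bis m j)) * sin (theta m / 2).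
Proof.
  intros Hth [r [al [Hr [Hal ->]]]].
  rewrite psub_padd, dot_pscale, cross_pscale, dot_dir, cross_dir, Rabs_mult, (Rabs_pos_eq r)
    by lra.
  destruct (abs_sin_le_cos (al - bis m j) (theta m / 2)) as [Hc Hs];
    [apply Rabs_le; lra | lra |].
  split; [apply Rmult_lt_0_compat |]; nra.
Qed.

Lemma cos_sign_mul (s g : R) : s = 1 \/ s = -1 -> cos (s * g) = cos g.
Proof. intros [-> | ->]; [f_equal; ring |]. replace (-1 * g) with (- g) by ring. apply cos_neg. Qed.

Lemma sin_sign_mul (s g : R) : s = 1 \/ s = -1 -> sin (s * g) = s * sin g.
Proof. intros [-> | ->]; [rewrite !Rmult_1_l; reflexivity |].
  replace (-1 * g) with (- g) by ring. rewrite sin_neg. ring. Qed.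

Lemma is_corner_dists (m j : nat) (v w p : point) (s : R) :
  s = 1 \/ s = -1 -> is_corner m j v w s p ->
  pdist v p * cos (theta m / 2) = dot (psub w v) (dir (bis m j)) /\
  pdist p w = Rabs (pdist v p * sin (theta m / 2) - s * cross (dir (bis m j)) (psub w v)) /\
  snd p - snd v = pdist v p * sin (bis m j + s * (theta m / 2)).
Proof.
  intros Hs [t [Ht [-> Hdot]]].
  rewrite pdist_padd_dir by exact Ht.
  set (b := bis m j) in *. set (g := theta m / 2) in *.
  assert (Hangle : b + s * g - b = s * g) by ring.
  rewrite psub_padd, dot_pscale, dot_dir, Hangle, cos_sign_mul in Hdot by exact Hs.
  split; [exact Hdot | split].
  - rewrite (pdist_perp _ _ b).
    + rewrite (cross_psub_shift _ _ v), psub_padd, cross_pscale, cross_dir, Hangle,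
        sin_sign_mul by exact Hs.
      destruct Hs as [-> | ->]; [f_equal; ring | rewrite <- Rabs_Ropp; f_equal; ring].
    + rewrite (dot_psub_shift _ _ v), psub_padd, dot_pscale, dot_dir, Hangle, cos_sign_mul, Hdot
        by exact Hs.
      ring.
  - unfold padd, pscale, dir. cbn [fst snd]. ring.
Qed.

Lemma canonical_corners (m j : nat) (v w c d : point) :
  0 < theta m < PI -> 0 < cos (bis m j) -> in_cone m j v w ->
  ((is_corner m j v w 1 c /\ is_corner m j v w (-1) d) \/
   (is_corner m j v w (-1) c /\ is_corner m j v w 1 d)) ->
  snd d <= snd c ->
  pdist v d = pdist v c /\
  pdist v c * cos (theta m / 2) = dot (psub w v) (dir (bis m j)) /\
  Rabs (cross (dir (bis m j)) (psub w v)) <= pdist v c * sin (theta m / 2) /\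
  pdist c w = pdist v c * sin (theta m / 2) - cross (dir (bis m j)) (psub w v) /\
  pdist d w = pdist v c * sin (theta m / 2) + cross (dir (bis m j)) (psub w v).
Proof.
  intros Hth Hb Hcone Hcorn Hdc.
  destruct (in_cone_coords m j v w ltac:(lra) Hcone) as [HD HPD].
  set (g := theta m / 2) in *. set (b := bis m j) in *.
  set (P := cross (dir b) (psub w v)) in *.
  pose proof PI_RGT_0.
  assert (Hcg : 0 < cos g) by (apply cos_gt_0; unfold g; lra).
  assert (Hsg : 0 < sin g) by (apply sin_gt_0; unfold g; lra).
  destruct Hcorn as [[Hc Hd] | [Hc Hd]].
  - destruct (is_corner_dists m j v w c 1 (or_introl eq_refl) Hc) as [Hvc [Hcw _]].
    destruct (is_corner_dists m j v w d (-1) (or_intror eq_refl) Hd) as [Hvd [Hdw _]].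
    fold g b P in Hvc, Hcw, Hvd, Hdw.
    set (t := pdist v c) in *.
    assert (HP : Rabs P <= t * sin g).
    { apply (Rmult_le_reg_r (cos g)); [exact Hcg |]. rewrite <- Hvc in HPD. lra. }
    assert (Htd : pdist v d = t) by (apply (Rmult_eq_reg_r (cos g)); lra).
    rewrite Htd in Hdw.
    pose proof (Rle_abs P). pose proof (Rle_abs (- P)). rewrite Rabs_Ropp in *.
    repeat split; [exact Htd | exact Hvc | exact HP | |].
    + rewrite Hcw, Rabs_pos_eq; lra.
    + rewrite Hdw, Rabs_pos_eq; lra.
  - exfalso.
    destruct (is_corner_dists m j v w c (-1) (or_intror eq_refl) Hc) as [Hvc [_ Hsc]].
    destruct (is_corner_dists m j v w d 1 (or_introl eq_refl) Hd) as [Hvd [_ Hsd]].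
    fold g b in Hvc, Hsc, Hvd, Hsd.
    assert (Ht : pdist v c = pdist v d) by (apply (Rmult_eq_reg_r (cos g)); lra).
    assert (Htpos : 0 < pdist v c) by nra.
    rewrite sin_plus in Hsd. rewrite sin_plus, cos_sign_mul, sin_sign_mul in Hsc
      by (right; reflexivity).
    rewrite Rmult_1_l in Hsd.
    rewrite <- Ht in Hsd.
    assert (0 < pdist v c * cos b * sin g) by (repeat apply Rmult_lt_0_compat; assumption).
    lra.
Qed.

Lemma ray_horizontal_dists (g ta : R) (v w a : point) :
  0 <= sin g -> 0 <= ta -> a = padd v (pscale ta (dir (PI / 2 + g))) ->
  snd a = snd w -> fst v < fst w ->
  pdist v a * cos g = snd w - snd v /\
  pdist a w * cos g = (fst w - fst v) * cos g + (snd w - snd v) * sin g.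
Proof.
  intros Hs Hta Ha Hsnd Hfst.
  assert (Hxa : fst a = fst v - ta * sin g).
  { rewrite Ha. unfold padd, pscale, dir. cbn [fst snd].
    rewrite cos_plus, cos_PI2, sin_PI2. ring. }
  assert (Hya : snd a = snd v + ta * cos g).
  { rewrite Ha. unfold padd, pscale, dir. cbn [fst snd].
    rewrite sin_plus, cos_PI2, sin_PI2. ring. }
  split.
  - rewrite Ha, pdist_padd_dir by exact Hta. rewrite <- Hsnd, Hya. ring.
  - rewrite pdist_same_snd by (try exact Hsnd; pose proof (Rmult_le_pos _ _ Hta Hs); lra).
    rewrite Hxa, <- Hsnd, Hya. ring.
Qed.

Lemma cone_angle_le_PI (m n : nat) : (0 < m)%nat -> (n <= m)%nat -> INR n * (theta m / 2) <= PI.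
Proof.
  intros Hm Hn. pose proof PI_RGT_0.
  assert (0 < INR m) by (apply lt_0_INR; exact Hm).
  assert (INR n <= INR m) by (apply le_INR; exact Hn).
  replace (INR n * (theta m / 2)) with (PI * (INR n / INR m)) by (unfold theta; field; lra).
  rewrite <- (Rmult_1_r PI) at 2. apply Rmult_le_compat_l; [lra |].
  apply (Rmult_le_reg_r (INR m)); [lra |]. field_simplify; lra.
Qed.

Lemma cone_angle_bounds (m i : nat) : (1 <= i)%nat -> (4 * i + 2 <= m)%nat ->
  0 < theta m / 2 /\ 2 * (theta m / 2) <= INR i * theta m /\
  2 * (INR i * theta m) + 2 * (theta m / 2) <= PI.
Proof.
  intros Hi Hm. pose proof PI_RGT_0 as HPI.
  assert (Hth : 0 < theta m) by (apply Rdiv_lt_0_compat; [lra | apply lt_0_INR; lia]).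
  assert (Hi1 : 1 <= INR i) by (apply (le_INR 1); exact Hi).
  pose proof (cone_angle_le_PI m (4 * i + 2) ltac:(lia) Hm) as Hle.
  rewrite plus_INR, mult_INR in Hle. simpl INR in Hle.
  repeat split; nra.
Qed.

Lemma cone_angle_far (m i : nat) : (4 * i + 6 <= m)%nat ->
  2 * (INR i * theta m) + 6 * (theta m / 2) <= PI.
Proof.
  intros Hm. pose proof (cone_angle_le_PI m (4 * i + 6) ltac:(lia) Hm) as H.
  rewrite plus_INR, mult_INR in H. simpl INR in H. lra.
Qed.

Lemma sin_le_cos_add (g y : R) : 0 <= g -> 0 <= y -> 2 * y + g <= PI / 2 -> sin y <= cos (y + g).
Proof. intros. rewrite <- cos_shift. pose proof PI_RGT_0. apply cos_decr_1; lra. Qed.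

Lemma sin_le_sin_sym (a p : R) : 0 <= a -> a <= p -> p + a <= PI -> sin a <= sin p.
Proof.
  intros. pose proof PI_RGT_0. pose proof (form4 p a).
  assert (0 <= cos ((p + a) / 2)) by (apply cos_ge_0; lra).
  assert (0 <= sin ((p - a) / 2)) by (apply sin_ge_0; lra).
  nra.
Qed.

Lemma cos_add_sin_double_le (g p : R) :
  0 <= g -> 2 * g <= p -> 2 * p + 2 * g <= PI -> cos g + sin (2 * g) <= cos (p - g) + sin p.
Proof.
  intros. pose proof PI_RGT_0.
  pose proof (form4 p (2 * g)) as Hs. pose proof (form2 (p - g) g) as Hc.
  replace ((p - g - g) / 2) with ((p - 2 * g) / 2) in Hc by field.
  replace ((p - g + g) / 2) with (p / 2) in Hc by field.
  replace ((p + 2 * g) / 2) with (p / 2 + g) in Hs by field.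
  assert (0 <= sin ((p - 2 * g) / 2)) by (apply sin_ge_0; lra).
  assert (sin (p / 2) <= cos (p / 2 + g)) by (apply sin_le_cos_add; lra).
  nra.
Qed.

Lemma one_add_sin_le (g p : R) :
  0 <= g -> 0 <= p -> p + g <= PI / 2 -> 1 + sin g <= cos p + sin (p + g).
Proof.
  intros. pose proof PI_RGT_0.
  assert (Hh : 0 <= sin (p / 2)) by (apply sin_ge_0; lra).
  assert (Hlt : sin (p / 2) <= cos (p / 2 + g)) by (apply sin_le_cos_add; lra).
  rewrite cos_plus in Hlt. rewrite sin_plus.
  replace p with (2 * (p / 2)) by field.
  rewrite cos_2a_sin, sin_2a.
  nra.
Qed.

Lemma affine_nonneg (A B lo hi x : R) :
  lo <= x <= hi -> 0 <= A + B * lo -> 0 <= A + B * hi -> 0 <= A + B * x.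
Proof. intros. destruct (Rle_lt_dec B 0); nra. Qed.

Section CornerPaths.

(* t = |vc| = |vd|, P is the offset of w from the bisector of C_i^v towards c, va = |va|,
   aw = |aw|, g = θ/2 and phi = iθ (the bisector of C_i^v has angle π/2 - phi). *)

Variables g phi t P va aw : R.
Hypothesis g_pos : 0 < g.
Hypothesis phi_ge : 2 * g <= phi.
Hypothesis phi_le : 2 * phi + 2 * g <= PI.
Hypothesis P_bound : Rabs P <= t * sin g.
Hypothesis va_eq : va * cos g = t * cos g * cos phi + P * sin phi.
Hypothesis aw_eq : aw * cos g =
  (t * cos g * sin phi - P * cos phi) * cos g + (t * cos g * cos phi + P * sin phi) * sin g.

(* Everything is expressed through S and C, so that the endpoint values below match the
   trigonometric facts as polynomials. *)
Let S := sin (phi + g).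
Let C := cos (phi + g).

Let cos_g_pos : 0 < cos g.
Proof. apply cos_gt_0; pose proof PI_RGT_0; lra. Qed.

Let sin_g_pos : 0 < sin g.
Proof. apply sin_gt_0; pose proof PI_RGT_0; lra. Qed.

Let P_between : - (t * sin g) <= P <= t * sin g.
Proof. pose proof (Rle_abs P); pose proof (Rle_abs (- P)); rewrite Rabs_Ropp in *; lra. Qed.

Let t_ge0 : 0 <= t.
Proof. pose proof (Rabs_pos P). nra. Qed.

Let sin_phi_eq : sin phi = S * cos g - C * sin g.
Proof. unfold S, C. rewrite <- sin_minus. f_equal; ring. Qed.

Let cos_phi_eq : cos phi = C * cos g + S * sin g.
Proof. unfold S, C. rewrite <- cos_minus. f_equal; ring. Qed.

Let sin_phi2_eq : sin (phi + 2 * g) = S * cos g + C * sin g.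
Proof. unfold S, C. rewrite <- sin_plus. f_equal; ring. Qed.

Let t_pyth : t * C * (cos g ^ 2 + sin g ^ 2) = t * C.
Proof.
  replace (cos g ^ 2 + sin g ^ 2) with 1 by (rewrite <- (sin2_cos2 g); unfold Rsqr; ring).
  ring.
Qed.

Let aw_eq' : aw * cos g = t * cos g * S - P * C.
Proof. rewrite aw_eq. unfold S, C. rewrite sin_plus, cos_plus. ring. Qed.

Let sin_phi_ge : 0 <= S * cos g - C * sin g - 2 * sin g * cos g.
Proof.
  assert (H : sin (2 * g) <= sin phi)
    by (apply sin_le_sin_sym; lra).
  rewrite sin_2a, sin_phi_eq in H. lra.
Qed.

Let sin_phi2_ge : 0 <= S * cos g + C * sin g - 2 * sin g * cos g.
Proof.
  assert (H : sin (2 * g) <= sin (phi + 2 * g))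
    by (apply sin_le_sin_sym; lra).
  rewrite sin_2a, sin_phi2_eq in H. lra.
Qed.

Let near_ge : 0 <= (C * cos g + S * sin g) * cos g + (S * cos g - C * sin g) * sin g
                   + (S * cos g - C * sin g) - cos g - 2 * sin g * cos g.
Proof.
  assert (H : cos g + sin (2 * g) <= cos (phi - g) + sin phi)
    by (apply cos_add_sin_double_le; lra).
  rewrite cos_minus, sin_2a, cos_phi_eq, sin_phi_eq in H. lra.
Qed.

Let far_ge : 2 * phi + 6 * g <= PI ->
  0 <= C + S * cos g + C * sin g - cos g - 2 * sin g * cos g.
Proof.
  intros Hfar.
  assert (H : cos g + sin (2 * g) <= cos (phi + 2 * g - g) + sin (phi + 2 * g))
    by (apply cos_add_sin_double_le; lra).
  replace (phi + 2 * g - g) with (phi + g) in H by ring.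
  rewrite sin_2a, sin_phi2_eq in H. fold C in H. lra.
Qed.

Let zero_ge : 0 <= C * cos g + S * sin g + S - 1 - sin g.
Proof.
  assert (H : 1 + sin g <= cos phi + sin (phi + g))
    by (apply one_add_sin_le; lra).
  rewrite cos_phi_eq in H. fold S in H. lra.
Qed.

Lemma upper_corner_dist_le : t * sin g - P <= aw.
Proof.
  apply (Rmult_le_reg_r (cos g)); [exact cos_g_pos|]. rewrite aw_eq'.
  enough (0 <= (t * cos g * S - t * sin g * cos g) + (cos g - C) * P) by lra.
  apply (affine_nonneg _ _ (- (t * sin g)) (t * sin g)); [exact P_between | |].
  - pose proof (Rmult_le_pos _ _ t_ge0 sin_phi2_ge). lra.
  - pose proof (Rmult_le_pos _ _ t_ge0 sin_phi_ge). nra.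
Qed.

Lemma lower_corner_dist_le : t * sin g + P <= aw.
Proof.
  apply (Rmult_le_reg_r (cos g)); [exact cos_g_pos|]. rewrite aw_eq'.
  enough (0 <= (t * cos g * S - t * sin g * cos g) + (- (C + cos g)) * P) by lra.
  apply (affine_nonneg _ _ (- (t * sin g)) (t * sin g)); [exact P_between | |].
  - pose proof (Rmult_le_pos _ _ t_ge0 sin_phi2_ge). nra.
  - pose proof (Rmult_le_pos _ _ t_ge0 sin_phi_ge). lra.
Qed.

Let va_eq' : va * cos g = t * cos g * (C * cos g + S * sin g) + P * (S * cos g - C * sin g).
Proof. rewrite va_eq, cos_phi_eq, sin_phi_eq. ring. Qed.

Lemma lower_corner_path_le : 2 * phi + 6 * g <= PI \/ 0 <= P -> t + (t * sin g + P) <= va + aw.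
Proof.
  intros Hcase. apply (Rmult_le_reg_r (cos g)); [exact cos_g_pos|].
  rewrite (Rmult_plus_distr_r va aw), va_eq', aw_eq'.
  enough (0 <= t * cos g * (C * cos g + S * sin g) + t * cos g * S - t * cos g - t * sin g * cos g
               + ((S * cos g - C * sin g) - C - cos g) * P) by lra.
  pose proof (Rmult_le_pos _ _ t_ge0 near_ge).
  destruct Hcase as [Hfar | HP0].
  - apply (affine_nonneg _ _ (- (t * sin g)) (t * sin g)); [exact P_between | | nra].
    pose proof (Rmult_le_pos _ _ t_ge0 (far_ge Hfar)). nra.
  - apply (affine_nonneg _ _ 0 (t * sin g)); [lra | | nra].
    pose proof (Rmult_le_pos _ _ (Rmult_le_pos _ _ t_ge0 (Rlt_le _ _ cos_g_pos)) zero_ge). nra.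
Qed.

Lemma upper_corner_path_le : 2 * phi + 6 * g <= PI \/ 0 <= P -> t + (t * sin g - P) <= va + aw.
Proof.
  intros [Hfar | HP0].
  2: { pose proof (lower_corner_path_le (or_intror HP0)). lra. }
  apply (Rmult_le_reg_r (cos g)); [exact cos_g_pos|].
  rewrite (Rmult_plus_distr_r va aw), va_eq', aw_eq'.
  enough (0 <= t * cos g * (C * cos g + S * sin g) + t * cos g * S - t * cos g - t * sin g * cos g
               + ((S * cos g - C * sin g) - C + cos g) * P) by lra.
  apply (affine_nonneg _ _ (- (t * sin g)) (t * sin g)); [exact P_between | |].
  - pose proof (Rmult_le_pos _ _ t_ge0 (far_ge Hfar)). nra.
  - pose proof (Rmult_le_pos _ _ t_ge0 near_ge). nra.
Qed.

End CornerPaths.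

Theorem mainTheorem3 :
  forall (k x : nat) (u v w a c d : point) (i : nat),
    (1 <= k)%nat -> (2 <= x <= 5)%nat ->
    let m := (4 * k + x)%nat in
    NoDup (u :: v :: w :: nil) ->
    gen_pos m (u :: v :: w :: nil) ->
    in_cone m 0 u w ->
    in_canon_tri m 0 u w v ->
    fst v < fst w ->
    snd a = snd w ->
    (exists t : R, 0 <= t /\ a = padd v (pscale t (dir (bis m 0 + theta m / 2)))) ->
    (i < m)%nat ->
    in_cone m i v w ->
    ((is_corner m i v w 1 c /\ is_corner m i v w (-1) d) \/
     (is_corner m i v w (-1) c /\ is_corner m i v w 1 d)) ->
    snd d <= snd c ->
    ((1 <= i <= k - 1)%nat \/ (i = k /\ pdist c w <= pdist d w)) ->
    Rmax (pdist v c + pdist c w) (pdist v d + pdist d w) <= pdist v a + pdist a w /\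
    Rmax (pdist c w) (pdist d w) <= pdist a w.
Proof.
  intros k x u v w a c d i Hk Hx m _ _ _ _ Hvw Hay [ta [Hta Ha]] _ Hcone Hcorn Hdc Hcase.
  assert (Hi : (1 <= i /\ 4 * i + 2 <= m)%nat) by (unfold m; destruct Hcase as [? | [-> _]]; lia).
  set (g := theta m / 2). set (phi := INR i * theta m).
  destruct (cone_angle_bounds m i (proj1 Hi) (proj2 Hi)) as [Hg [Hphi Hpi]].
  fold g phi in Hg, Hphi, Hpi.
  pose proof PI_RGT_0 as HPI.
  assert (Hbis : bis m i = PI / 2 - phi) by reflexivity.
  assert (Hcb : 0 < cos (bis m i)) by (rewrite Hbis, cos_shift; apply sin_gt_0; lra).
  destruct (canonical_corners m i v w c d ltac:(unfold g in *; lra) Hcb Hcone Hcorn Hdc)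
    as [Hvd [Hvc [HP [Hcw Hdw]]]].
  destruct (frame_coords w v (bis m i)) as [HX HY].
  fold g in Hvc, HP, Hcw, Hdw. rewrite <- Hvc, Hbis, cos_shift, sin_shift in HX, HY.
  set (P := cross (dir (bis m i)) (psub w v)) in *. set (t := pdist v c) in *.
  assert (Ha' : a = padd v (pscale ta (dir (PI / 2 + g)))).
  { rewrite Ha. unfold bis, g. change (INR 0) with 0. do 3 f_equal. ring. }
  destruct (ray_horizontal_dists g ta v w a ltac:(apply sin_ge_0; lra) Hta Ha' Hay Hvw)
    as [Hva Haw].
  rewrite HY in Hva. rewrite HX, HY in Haw.
  assert (Hreach : 2 * phi + 6 * g <= PI \/ 0 <= P).
  { destruct Hcase as [Hlt | [_ Hle]]; [left | right; lra].
    apply cone_angle_far. unfold m. lia. }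
  rewrite Hvd, Hcw, Hdw. split; apply Rmax_lub;
    [eapply upper_corner_path_le | eapply lower_corner_path_le |
     eapply upper_corner_dist_le | eapply lower_corner_dist_le]; eassumption.
Qed.
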